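(* Let $n\ge2$, $A\in\mathbb{R}^{n\times m}$, $B\in\mathbb{R}^{m\times n}$, and let $W$ be a cycle in $G_{A,B}$ with vertex sequence $(S_{i_1},R_{j_1},\dots,S_{i_N},R_{j_N},S_{i_1})$. (i) A cycle $C$ in $G^{[2]}_{A,B}$ is an external lifting of $W$ if and only if there exists $p\notin\{i_1,\dots,i_N\}$ such that $C=(i_1p,\,j_1^p,\,i_2p,\,j_2^p,\dots,i_Np,\,j_N^p,\,i_1p)$. (ii) If $C$ is an internal lifting of $W$, then every S-vertex of $C$ is of the form $ab$ with $a,b\in\{i_1,\dots,i_N\}$.
   Context: DSR graphs: for $A\in\mathbb{R}^{n\times m}$, $B\in\mathbb{R}^{m\times n}$, $G_{A,B}$ is the signed bipartite digraph with S-vertices $S_1,\dots,S_n$ and R-vertices $R_1,\dots,R_m$, an arc $R_j\to S_i$ of sign $\mathrm{sign}(A_{ij})$ iff $A_{ij}\ne0$, an arc $S_i\to R_j$ of sign $\mathrm{sign}(B_{ji})$ iff $B_{ji}\ne0$, with antiparallel arcs of equal sign merged into an undirected edge. Walks traverse edges consistently with orientation (empty walks allowed); a cycle is a nonempty closed walk with no repeated vertex except first$=$last. DSR$^{[2]}$ graph: $\overline{\mathbf L}^A\in\mathbb{R}^{\binom n2\times mn}$ has rows indexed by $(i,j)$, $i<j$, columns by $(k,l)$, $1\le k\le m$, $1\le l\le n$, entries $A_{jk}$ if $l=i$, $-A_{ik}$ if $l=j$, $0$ otherwise; $\underline{\mathbf L}^B\in\mathbb{R}^{mn\times\binom n2}$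 has $(k,l),(i,j)$ entry $B_{kj}$ if $l=i$, $-B_{ki}$ if $l=j$, $0$ otherwise. $G^{[2]}_{A,B}:=G_{\overline{\mathbf L}^A,\underline{\mathbf L}^B}$, with S-vertices $ij=ji$ ($i\ne j$) and R-vertices $k^l$; an edge $(ij,k^l)$ exists only if $l\in\{i,j\}$. The projection $\pi$ sends an edge $(ij,k^j)$ to the edge $(S_i,R_k)$ of $G_{A,B}$. Direct/twisted and $\pi(C)$ for a cycle $C$ of $G^{[2]}_{A,B}$: let $C$ have S-vertex sequence $a_1b_1,\dots,a_{T+1}b_{T+1}=a_1b_1$, and write the segment from $a_rb_r$ to $a_{r+1}b_{r+1}$ as $(a_rb_r,k^l,a_{r+1}b_{r+1})$ with $l$ the common index; its projection is a length-2 walk from $S_x$ to $S_y$, with $x$ the element of $\{a_r,b_r\}$ other than $l$ and $y$ that of $\{a_{r+1},b_{r+1}\}$ other than $l$. Starting from empty walks at $S_{a_1}$ and $S_{b_1}$, for $r=1,\dots,T$ append the projected segment to whichever current walk ends at $S_x$. If the final walks $W',W''$ are both closed, $C$ is direct and $\pi(C)=\{W',W''\}$; otherwise $C$ is twisted and $\pi(C)=W'\sqcup W''$ (the closed walk traversing $W'$ then $W''$). Liftings: a cycle $C$ of $G^{[2]}_{A,B}$ is a lifting of the cycle $W$ of $G_{A,B}$ if it projects to $W$ (up to choice of starting vertex), i.e. either $C$ is twisted and $\pi(C)=W$, in which case $C$ is an internal lifting of $W$; or $C$ is direct with $\pi(C)=\{W',W''\}$ where one of $W',W''$ is empty and the other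 is $W$, in which case $C$ is an external lifting of $W$. *)

From mathcomp Require Import all_boot all_order all_algebra.
Set Implicit Arguments. Unset Strict Implicit. Unset Printing Implicit Defensive.
Import GRing.Theory.
Local Open Scope ring_scope.

(* Generic DSR graph G_{A,B} for A : S -> R -> K (A s r = A_{sr}) and  *)
(* B : R -> S -> K (B r s = B_{rs}).  Vertices: inl s = S-vertex,       *)
(* inr r = R-vertex.  Between S_s and R_r there is at most one          *)
(* traversable edge in each direction (an arc or the merged undirected  *)
(* edge), so a walk is determined by its vertex sequence; dsr_adj u v   *)
(* says one can step from u to v along an edge consistently with its    *)
(* orientation.  A cycle is represented by the list [v1; ...; vL] of    *)
(* its vertices (the closing vertex v_{L+1} = v1 omitted); cycles that  *)
(* differ only by the choice of starting vertex are rotations (rot).    *)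
Section DSR.
Variables (S R : eqType) (K : zmodType) (A : S -> R -> K) (B : R -> S -> K).

Definition dsr_adj : rel (S + R) := fun u v =>
  match u, v with
  | inr r, inl s => A s r != 0
  | inl s, inr r => B r s != 0
  | _, _ => false
  end.

End DSR.

Definition dsr_cycle (V : eqType) (e : rel V) (c : seq V) : bool :=
  [&& c != [::], cycle e c & uniq c].

(* S-vertices ij = ji of G^[2], represented by the increasing pair (i,j), i<j *)
Definition S2 (n : nat) := {p : 'I_n * 'I_n | (p.1 < p.2)%N}.
(* R-vertices k^l represented by (k, l) *)
Definition R2 (n m : nat) := ('I_m * 'I_n)%type.

Definition V1 (n m : nat) := ('I_n + 'I_m)%type.
Definition V2 (n m : nat) := (S2 n + R2 n m)%type.

Section Compound.
Variables (K : zmodType) (n m : nat) (A : 'M[K]_(n, m)) (B : 'M[K]_(m, n)).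

Definition LA (s : S2 n) (c : R2 n m) : K :=
  let i := (val s).1 in let j := (val s).2 in let k := c.1 in let l := c.2 in
  if l == i then A j k else if l == j then - A i k else 0.

Definition LB (c : R2 n m) (s : S2 n) : K :=
  let i := (val s).1 in let j := (val s).2 in let k := c.1 in let l := c.2 in
  if l == i then B k j else if l == j then - B k i else 0.

Definition G1_adj : rel (V1 n m) := dsr_adj (fun i k => A i k) (fun k i => B k i).
Definition G2_adj : rel (V2 n m) := dsr_adj LA LB.
End Compound.

Section Projection.
Variables (n m : nat).

(* a walk of G_{A,B}: its initial vertex and the list of subsequent vertices *)
Definition walk := (V1 n m * seq (V1 n m))%type.
Definition wend (w : walk) : V1 n m := last w.1 w.2.
Definition wclosed (w : walk) : bool := wend w == w.1.
Definition wempty (w : walk) : bool := w.2 == [::].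
Definition wcat (w1 w2 : walk) : walk := (w1.1, w1.2 ++ w2.2).

Definition other (p : 'I_n * 'I_n) (l : 'I_n) : 'I_n := if p.1 == l then p.2 else p.1.

(* the segments (a_r b_r, k^l, a_{r+1} b_{r+1}) of a cycle list starting
   at an S-vertex, with wrap-around to the first vertex *)
Fixpoint segs (first : V2 n m) (c : seq (V2 n m)) : seq (V2 n m * V2 n m * V2 n m) :=
  match c with
  | s :: r :: rest => (s, r, head first rest) :: segs first rest
  | _ => [::]
  end.

Definition proj_step (st : walk * walk) (seg : V2 n m * V2 n m * V2 n m) : walk * walk :=
  match seg with
  | (inl sp, inr (k, l), inl sp') =>
      let x := other (val sp) l in
      let y := other (val sp') l in
      let ext (w : walk) : walk := (w.1, w.2 ++ [:: inr k; inl y]) in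
      if wend st.1 == inl x then (ext st.1, st.2) else (st.1, ext st.2)
  | _ => st
  end.

Definition proj_walks (c : seq (V2 n m)) : option (walk * walk) :=
  match c with
  | inl s :: _ =>
      Some (foldl proj_step ((inl (val s).1, [::]), (inl (val s).2, [::]))
                  (segs (inl s) c))
  | _ => None
  end.

Definition walk_is_cycle (w : walk) (W : seq (V1 n m)) : Prop :=
  wclosed w /\ exists r : nat, w.2 = rot r W.

Definition external_lifting (C : seq (V2 n m)) (W : seq (V1 n m)) : Prop :=
  exists r : nat, exists w1 w2 : walk,
    proj_walks (rot r C) = Some (w1, w2) /\ wclosed w1 /\ wclosed w2 /\
    ((wempty w1 /\ walk_is_cycle w2 W) \/ (wempty w2 /\ walk_is_cycle w1 W)).

Definition internal_lifting (C : seq (V2 n m)) (W : seq (V1 n m)) : Prop :=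
  exists r : nat, exists w1 w2 : walk,
    proj_walks (rot r C) = Some (w1, w2) /\ ~~ (wclosed w1 && wclosed w2) /\
    walk_is_cycle (wcat w1 w2) W.
End Projection.

Definition Wlist (n m : nat) (ii : seq 'I_n) (jj : seq 'I_m) : seq (V1 n m) :=
  flatten [seq [:: inl ij.1; inr ij.2] | ij <- zip ii jj].

Definition upair (n : nat) (i j : 'I_n) : 'I_n * 'I_n :=
  if (i < j)%N then (i, j) else (j, i).

Definition vval (n m : nat) (v : V2 n m) : ('I_n * 'I_n) + R2 n m :=
  match v with inl s => inl (val s) | inr r => inr r end.

Definition ext_form (n m : nat) (ii : seq 'I_n) (jj : seq 'I_m) (p : 'I_n)
  : seq (('I_n * 'I_n) + R2 n m) :=
  flatten [seq [:: inl (upair ij.1 p); inr (ij.2, p)] | ij <- zip ii jj].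

(* Follow a cycle C of G^[2] from an S-vertex a_1 b_1.  Each segment
   (ab, k^l, a'b') has l in both ab and a'b', and its projection S_x R_k S_y
   (with {x, l} = ab, {y, l} = a'b') is appended to the walk ending at x.  By
   induction the two partial walks always end at the two elements of the
   current S-vertex; so every index of every S-vertex of C is visited, and
   the walk starting at q receives nothing iff every R-vertex of C is k^q,
   i.e. C = (i_1 q, j_1^q, ..., i_N q, j_N^q).  Then the other walk is W up to
   rotation, and q is not on W since no S-vertex is qq.  For a twisted cycle
   the walks end swapped, so both starting indices lie on W'W'' = W as well. *)

From mathcomp Require Import all_boot all_order all_algebra zify.
Set Implicit Arguments. Unset Strict Implicit. Unset Printing Implicit Defensive.

Arguments proj_step : simpl never.

Definition in_pair n (p : 'I_n * 'I_n) (a : 'I_n) : bool := (a == p.1) || (a == p.2).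

Section Other.
Variables (n : nat) (p : 'I_n * 'I_n).
Hypothesis p_neq : p.1 != p.2.

Lemma other_in_pair l : in_pair p (other p l).
Proof. by rewrite /in_pair /other; case: ifP; rewrite eqxx ?orbT. Qed.

Lemma eq_other a l : in_pair p a -> in_pair p l -> (a == other p l) = (a != l).
Proof.
move: p_neq; rewrite /in_pair /other; case: p => x y /= xy.
have yx : y != x by rewrite eq_sym.
by case/orP=> /eqP-> /orP[]/eqP->; rewrite ?eqxx ?(negbTE xy) ?(negbTE yx) ?eqxx.
Qed.

Lemma other_neq l : in_pair p l -> other p l != l.
Proof. by move=> pl; rewrite eq_sym eq_other ?eqxx. Qed.

Lemma other_eq l q : in_pair p q -> in_pair p l -> l != q -> other p l = q.
Proof. by move=> pq pl lq; apply/esym/eqP; rewrite eq_other // eq_sym. Qed.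

Lemma otherK l : in_pair p l -> other p (other p l) = l.
Proof. by move=> pl; rewrite (other_eq pl (other_in_pair l)) ?other_neq. Qed.

End Other.

Lemma S2_neq n (s : S2 n) : (val s).1 != (val s).2.
Proof. by apply: contraTneq (valP s) => ->; rewrite ltnn. Qed.

Lemma in_pair_upair n (i q : 'I_n) : in_pair (upair i q) q.
Proof. by rewrite /upair /in_pair; case: ifP; rewrite eqxx ?orbT. Qed.

Lemma other_upair n (i q : 'I_n) : i != q -> other (upair i q) q = i.
Proof. by move=> iq; rewrite /upair; case: (_ < _)%N; rewrite /other /= ?eqxx // (negbTE iq). Qed.

Lemma upair_other n (p : 'I_n * 'I_n) q :
  (p.1 < p.2)%N -> in_pair p q -> upair (other p q) q = p.
Proof.
case: p => a b /= ab /orP[]/eqP->; rewrite /other /upair /=.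
  by rewrite eqxx ltnNge (ltnW ab).
have nab : a != b by apply: contraTneq ab => ->; rewrite ltnn.
by rewrite (negbTE nab) ab.
Qed.

Section Pinning.
Variables n m : nat.
Local Notation vdata := (('I_n * 'I_n) + R2 n m)%type.
Implicit Types (q : 'I_n) (ii : seq 'I_n) (jj : seq 'I_m).

Definition lift_vertex q (v : V1 n m) : vdata :=
  match v with inl i => inl (upair i q) | inr k => inr (k, q) end.

Definition proj_vertex q (d : vdata) : V1 n m :=
  match d with inl p => inl (other p q) | inr r => inr r.1 end.

Definition pinned q (d : vdata) : bool :=
  match d with inl p => in_pair p q | inr r => r.2 == q end.

Lemma ext_formE ii jj q : ext_form ii jj q = map (lift_vertex q) (Wlist ii jj).
Proof. by rewrite /Wlist map_flatten -map_comp. Qed.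

Lemma pinned_lift_vertex q v : pinned q (lift_vertex q v).
Proof. by case: v => [i|k] /=; rewrite ?in_pair_upair. Qed.

Lemma lift_proj_vertex q (v : V2 n m) :
  pinned q (vval v) -> lift_vertex q (proj_vertex q (vval v)) = vval v.
Proof. by case: v => [s|[k l]] /= => [sq | /eqP->]; rewrite ?upair_other ?(valP s). Qed.

Lemma proj_lift_vertex q v : v != inl q -> proj_vertex q (lift_vertex q v) = v.
Proof. by case: v => [i|k] //= iq; rewrite other_upair // (contraNneq _ iq) => // ->. Qed.

Lemma mem_Wlist_inl ii jj i : size ii = size jj -> (inl i \in Wlist ii jj) = (i \in ii).
Proof.
elim: ii jj => [|i0 ii IH] [|j0 jj] //= [/IH eq_i].
by rewrite !inE -eq_i.
Qed.

Lemma Wlist_neq_inr ii jj k rest : Wlist ii jj != inr k :: rest.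
Proof. by case: ii jj => [|i ii] [|j jj]. Qed.

Lemma map_proj_vertex_ext_form ii jj q : size ii = size jj -> q \notin ii ->
  map (proj_vertex q) (ext_form ii jj q) = Wlist ii jj.
Proof.
move=> sz qi; rewrite ext_formE -map_comp map_id_in // => v vW /=.
apply: proj_lift_vertex; apply: contraNneq qi => vq.
by rewrite -(mem_Wlist_inl q sz) -vq.
Qed.

Lemma vval_neq_diag (v : V2 n m) q : vval v != inl (q, q).
Proof.
case: v => [s|r] //=; rewrite (inj_eq inl_inj).
by apply: contraTneq (valP s); rewrite /= => ->; rewrite ltnn.
Qed.

End Pinning.

Section Walks.
Variables n m : nat.
Local Notation walks := (walk n m * walk n m)%type.

Definition swap_walks (st : walks) : walks := (st.2, st.1).

Definition start_walks (s : S2 n) : walks := ((inl (val s).1, [::]), (inl (val s).2, [::])).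

Definition wverts (w : walk n m) : seq (V1 n m) := w.1 :: w.2.

Definition ends_at (st : walks) (p : 'I_n * 'I_n) : Prop :=
  exists2 a, in_pair p a & (wend st.1, wend st.2) = (inl a, inl (other p a)).

Lemma wend_rcons2 (w : walk n m) u v : wend (w.1, w.2 ++ [:: u; v]) = v.
Proof. by rewrite /wend last_cat. Qed.

Lemma foldl_proj_step_extends sg (st : walks) : exists e1 e2,
  foldl (@proj_step n m) st sg = ((st.1.1, st.1.2 ++ e1), (st.2.1, st.2.2 ++ e2)).
Proof.
elim: sg st => [|[[u v] w] sg IH] [[a1 l1] [a2 l2]] /=.
  by exists [::], [::]; rewrite !cats0.
have [e1 [e2 ->]] := IH (proj_step ((a1, l1), (a2, l2)) (u, v, w)).
case: u v w => [s|?] [?|[k l]] [s'|?]; rewrite /proj_step /=; try by exists e1, e2.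
case: ifP => _ /=; [exists ([:: inr k; inl (other (val s') l)] ++ e1), e2 |
                     exists e1, ([:: inr k; inl (other (val s') l)] ++ e2)];
  by rewrite catA.
Qed.

Lemma mem_wend_open (w : walk n m) : ~~ wclosed w -> wend w \in w.2.
Proof.
by move=> open; have := mem_last w.1 w.2; rewrite inE -/(wend w) -/(wclosed w) (negbTE open).
Qed.

Lemma ends_at_start s : ends_at (start_walks s) (val s).
Proof. by exists (val s).1; rewrite /in_pair ?eqxx //= /other eqxx. Qed.

Lemma ends_at_wverts st p a : p.1 != p.2 -> ends_at st p -> in_pair p a ->
  inl a \in wverts st.1 ++ wverts st.2.
Proof.
move=> p_neq [a0 pa0 [e1 e2]] pa; rewrite mem_cat; case: (a =P a0) => [-> | /eqP aa0].
  by rewrite -e1 mem_last.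
by rewrite -(other_eq p_neq pa pa0) 1?eq_sym // -e2 mem_last orbT.
Qed.

Lemma sub_wverts_foldl sg st :
  {subset wverts st.1 ++ wverts st.2 <= wverts (foldl (@proj_step n m) st sg).1 ++
                                         wverts (foldl (@proj_step n m) st sg).2}.
Proof.
have [e1 [e2 ->]] := foldl_proj_step_extends sg st.
by move=> v; rewrite /wverts /= !(inE, mem_cat) => /or4P[] ->; rewrite ?orbT.
Qed.

Section Step.
Variables (st : walks) (s s' : S2 n) (k : 'I_m) (l : 'I_n).
Hypotheses (sl : in_pair (val s) l) (s'l : in_pair (val s') l).
Local Notation step := (proj_step st (inl s, inr (k, l), inl s')).

Lemma proj_step_ends_at : ends_at st (val s) -> ends_at step (val s').
Proof.
case=> a sa [e1 e2]; rewrite /proj_step /= e1 (inj_eq inl_inj) (eq_other (S2_neq s) sa sl).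
case: eqP => [al | /eqP al] /=.
  by exists l => //=; rewrite e1 al wend_rcons2.
exists (other (val s') l); first exact: other_in_pair.
by rewrite /= wend_rcons2 e2 (other_eq (S2_neq s) sl sa al) (otherK (S2_neq s') s'l).
Qed.

(* [proj_step] favours the first walk only when both walks end at x, which
   cannot happen while they end at the two distinct indices of [s]. *)
Lemma proj_step_swap :
  ends_at st (val s) -> proj_step (swap_walks st) (inl s, inr (k, l), inl s') = swap_walks step.
Proof.
case=> a sa [e1 e2]; rewrite /proj_step /= e1 e2 !(inj_eq inl_inj) (eq_other (S2_neq s) sa sl).
case: (a =P l) => [<- | /eqP al] /=; first by rewrite eqxx.
by rewrite (other_eq (S2_neq s) sl sa al) (other_eq (S2_neq s) sa sl) 1?eq_sym // (negbTE al).
Qed.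

End Step.

Lemma proj_step_pinned (st : walks) (s s' : S2 n) k q :
  in_pair (val s) q -> wend st.1 = inl q ->
  proj_step st (inl s, inr (k, q), inl s') =
  (st.1, (st.2.1, st.2.2 ++ [:: inr k; inl (other (val s') q)])).
Proof.
move=> sq e1; rewrite /proj_step /= e1 (inj_eq inl_inj) eq_sym.
by rewrite (negbTE (other_neq (S2_neq s) sq)).
Qed.

Lemma proj_step_unpinned (st : walks) (s s' : S2 n) k l q :
  in_pair (val s) q -> in_pair (val s) l -> l != q -> wend st.1 = inl q ->
  proj_step st (inl s, inr (k, l), inl s') =
  ((st.1.1, st.1.2 ++ [:: inr k; inl (other (val s') l)]), st.2).
Proof. by move=> sq sl lq e1; rewrite /proj_step /= e1 (other_eq (S2_neq s) sq sl lq) eqxx. Qed.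
End Walks.

Arguments start_walks {n m} s.
Arguments ends_at_start {n m} s.

Section Fold.
Variables (K : zmodType) (n m : nat) (A : 'M[K]_(n, m)) (B : 'M[K]_(m, n)).
Local Notation adj := (G2_adj A B).
Local Notation walks := (walk n m * walk n m)%type.
Local Notation start := (@start_walks n m).
Local Notation pfold sf st c := (foldl (@proj_step n m) st (segs (inl sf) c)).

Lemma G2_adj_SR s k l : adj (inl s) (inr (k, l)) -> in_pair (val s) l.
Proof. by rewrite /G2_adj /dsr_adj /LB /in_pair /=; do 2 case: (l == _); rewrite ?eqxx. Qed.

Lemma G2_adj_RS s k l : adj (inr (k, l)) (inl s) -> in_pair (val s) l.
Proof. by rewrite /G2_adj /dsr_adj /LA /in_pair /=; do 2 case: (l == _); rewrite ?eqxx. Qed.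

Lemma G2_path_ind (sf : S2 n) (P : S2 n -> seq (V2 n m) -> Prop) :
  (forall s k l, in_pair (val s) l -> in_pair (val sf) l -> P s [:: inr (k, l)]) ->
  (forall s k l s' p, in_pair (val s) l -> in_pair (val s') l -> P s' p ->
     P s (inr (k, l) :: inl s' :: p)) ->
  forall s p, path adj (inl s) (rcons p (inl sf)) -> P s p.
Proof.
move=> Pbase Pstep s p; have [N] := ubnP (size p).
elim: N s p => // N IH s [|[s'|[k l]] p] //= ltpN /andP[/G2_adj_SR sl].
case: p ltpN => [|[s'|r] p] /= ltpN.
- by case/andP=> /G2_adj_RS sfl _; exact: Pbase sl sfl.
- by case/andP=> /G2_adj_RS s'l /IH Ps'; apply: Pstep sl s'l (Ps' _); lia.
- by [].
Qed.

Section PathFold.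
Variables (sf : S2 n) (q : 'I_n).

Lemma pfold_single st s k l :
  pfold sf st [:: inl s; inr (k, l)] = proj_step st (inl s, inr (k, l), inl sf).
Proof. by []. Qed.

Lemma pfold_cons st s k l s' p : pfold sf st [:: inl s, inr (k, l), inl s' & p] =
  pfold sf (proj_step st (inl s, inr (k, l), inl s')) (inl s' :: p).
Proof. by []. Qed.

Lemma pfold_ends_at s p st : path adj (inl s) (rcons p (inl sf)) ->
  ends_at st (val s) -> ends_at (pfold sf st (inl s :: p)) (val sf).
Proof.
move=> P; elim/(@G2_path_ind sf): s p / P st => [s k l sl sfl | s k l s' p sl s'l IH] st e.
  by rewrite pfold_single; exact: (proj_step_ends_at k sl sfl e).
by rewrite pfold_cons; exact: (IH _ (proj_step_ends_at k sl s'l e)).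
Qed.

Lemma pfold_visits s p st : path adj (inl s) (rcons p (inl sf)) -> ends_at st (val s) ->
  forall t a, inl t \in inl s :: p -> in_pair (val t) a ->
  inl a \in wverts (pfold sf st (inl s :: p)).1 ++ wverts (pfold sf st (inl s :: p)).2.
Proof.
move=> P; elim/(@G2_path_ind sf): s p / P st => [s k l sl sfl | s k l s' p sl s'l IH] st e t a.
  rewrite !inE orbF => /eqP[->] sa.
  by apply: sub_wverts_foldl; exact: ends_at_wverts (S2_neq s) e sa.
rewrite inE => /predU1P[[->] sa | tp ta].
  by apply: sub_wverts_foldl; exact: ends_at_wverts (S2_neq s) e sa.
have tp' : inl t \in inl s' :: p by case/predU1P: tp.
by rewrite pfold_cons; exact: (IH _ (proj_step_ends_at k sl s'l e) t a tp' ta).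
Qed.

Lemma pfold_swap s p st : path adj (inl s) (rcons p (inl sf)) -> ends_at st (val s) ->
  pfold sf (swap_walks st) (inl s :: p) = swap_walks (pfold sf st (inl s :: p)).
Proof.
move=> P; elim/(@G2_path_ind sf): s p / P st => [s k l sl sfl | s k l s' p sl s'l IH] st e.
  by rewrite !pfold_single; exact: proj_step_swap.
by rewrite !pfold_cons proj_step_swap // IH //; exact: proj_step_ends_at.
Qed.

(* A segment through k^l with l != q would be appended to the first walk,
   which ends at q = other s l. *)
Lemma pinned_of_first_walk_fixed s p st : path adj (inl s) (rcons p (inl sf)) ->
  in_pair (val s) q -> wend st.1 = inl q -> (pfold sf st (inl s :: p)).1.2 = st.1.2 ->
  all (pinned q) (map (@vval n m) (inl s :: p)).
Proof.
have grows st' sg u v :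
    (foldl (@proj_step n m) ((st'.1.1, st'.1.2 ++ [:: u; v]), st'.2) sg).1.2 != st'.1.2.
  have [e1 [e2 ->]] := foldl_proj_step_extends sg ((st'.1.1, st'.1.2 ++ [:: u; v]), st'.2).
  by apply/eqP => /(congr1 size); rewrite /= !size_cat /=; lia.
move=> P; elim/(@G2_path_ind sf): s p / P st => [s k l sl sfl | s k l s' p sl s'l IH] st sq e1.
  rewrite pfold_single /= sq; case: (l =P q) => [-> // | /eqP lq].
  by rewrite (proj_step_unpinned _ _ sq sl lq e1) => /eqP; rewrite (negbTE (grows _ [::] _ _)).
rewrite pfold_cons; case: (l =P q) => [lq | /eqP lq]; last first.
  by rewrite (proj_step_unpinned _ _ sq sl lq e1) => /eqP; rewrite (negbTE (grows _ _ _ _)).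
subst l; rewrite (proj_step_pinned _ _ sq e1) => fixed.
by rewrite /= sq eqxx; exact: (IH (st.1, _) s'l e1 fixed).
Qed.

Lemma pfold_pinned s p st : path adj (inl s) (rcons p (inl sf)) -> wend st.1 = inl q ->
  all (pinned q) (map (@vval n m) (inl s :: p)) ->
  pfold sf st (inl s :: p) =
  (st.1, (st.2.1, st.2.2 ++ map (proj_vertex q) (map (@vval n m) (rcons p (inl sf))))).
Proof.
move=> P; elim/(@G2_path_ind sf): s p / P st => [s k l sl sfl | s k l s' p sl s'l IH] st e1.
  by rewrite pfold_single /= => /and3P[sq /eqP-> _]; rewrite proj_step_pinned.
rewrite pfold_cons /= => /and3P[sq /eqP lq pin]; subst l.
by rewrite proj_step_pinned // IH //= -catA.
Qed.

End PathFold.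

Section CycleFold.
Variables (s : S2 n) (p : seq (V2 n m)).
Hypothesis P : path adj (inl s) (rcons p (inl s)).

Lemma proj_walksE : proj_walks (inl s :: p) = Some (pfold s (start s) (inl s :: p)).
Proof. by []. Qed.

Definition pinned_walk q : walk n m :=
  (inl (other (val s) q), map (proj_vertex q) (map (@vval n m) (rcons p (inl s)))).

Lemma pinned_of_empty_walk w1 w2 : proj_walks (inl s :: p) = Some (w1, w2) ->
  wempty w1 || wempty w2 -> exists q, all (pinned q) (map (@vval n m) (inl s :: p)).
Proof.
rewrite proj_walksE => /Some_inj fold_eq /orP[] /eqP empty.
  exists (val s).1; apply: (pinned_of_first_walk_fixed (st := start s) P).
  - by rewrite /in_pair eqxx.
  - by [].
  - by rewrite fold_eq.
exists (val s).2; apply: (pinned_of_first_walk_fixed (st := swap_walks (start s)) P).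
- by rewrite /in_pair eqxx orbT.
- by [].
- by rewrite pfold_swap ?fold_eq //; exact: ends_at_start.
Qed.

Lemma proj_walks_pinned q : all (pinned q) (map (@vval n m) (inl s :: p)) ->
  proj_walks (inl s :: p) = Some (if (val s).1 == q then ((inl q, [::]), pinned_walk q)
                                  else (pinned_walk q, (inl q, [::]))).
Proof.
move=> pin; rewrite proj_walksE /pinned_walk /other; case: eqP => [s1q | /eqP s1q].
  have e1 : wend (start s).1 = inl q by rewrite /wend /= s1q.
  by rewrite (pfold_pinned P e1 pin) /= s1q.
have s2q : (val s).2 = q.
  by move: pin => /= /andP[/orP[] /eqP] // /esym/eqP; rewrite (negbTE s1q).
have e2 : wend (swap_walks (start s)).1 = inl q by rewrite /wend /= s2q.
have := pfold_swap P (ends_at_start s); rewrite (pfold_pinned P e2 pin) /= s2q.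
by case: (pfold s (start s) (inl s :: p)) => w1 w2 [-> ->].
Qed.

Lemma twisted_walks_cover w1 w2 : proj_walks (inl s :: p) = Some (w1, w2) ->
  ~~ (wclosed w1 && wclosed w2) ->
  forall t a, inl t \in inl s :: p -> in_pair (val t) a -> inl a \in w1.2 ++ w2.2.
Proof.
rewrite proj_walksE => /Some_inj fold_eq open t a tp ta.
have := pfold_visits P (ends_at_start s) tp ta; have := pfold_ends_at P (ends_at_start s).
have [e1 [e2 ext]] := foldl_proj_step_extends (segs (inl s) (inl s :: p)) (start s).
rewrite fold_eq in ext *; case: ext => w1E w2E; subst w1 w2.
case=> b sb; rewrite /wend /= => -[end1 end2].
have [s1b | s1b] := eqVneq b (val s).1.
  by move: open; rewrite /wclosed /wend /= end1 end2 s1b /other eqxx !eqxx.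
have s2b : b = (val s).2 by move: sb; rewrite /in_pair (negbTE s1b) => /eqP.
have neq12 : (inl (val s).1 == inl (val s).2 :> V1 n m) = false.
  by rewrite (inj_eq inl_inj) (negbTE (S2_neq s)).
have s2e1 : inl (val s).2 \in e1.
  rewrite -s2b -end1; apply: (@mem_wend_open _ _ (_, _)).
  by rewrite /wclosed /wend /= end1 s2b eq_sym neq12.
have o1 : other (val s) b = (val s).1 by rewrite s2b /other (negbTE (S2_neq s)).
have s1e2 : inl (val s).1 \in e2.
  rewrite -o1 -end2; apply: (@mem_wend_open _ _ (_, _)).
  by rewrite /wclosed /wend /= end2 o1 neq12.
rewrite /wverts /= !(inE, mem_cat) => /or4P[/eqP-> | -> | /eqP-> | ->];
  by rewrite ?s2e1 ?s1e2 ?orbT.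
Qed.
End CycleFold.

Section Liftings.
Variables (ii : seq 'I_n) (jj : seq 'I_m).
Hypothesis size_ij : size ii = size jj.
Local Notation W := (Wlist ii jj).

Lemma ext_form_of_pinned_projection (C : seq (V2 n m)) r q t :
  all (pinned q) (map (@vval n m) (rot r C)) ->
  map (proj_vertex q) (map (@vval n m) (rot r C)) = rot t W ->
  q \notin ii /\ exists r', map (@vval n m) (rot r' C) = ext_form ii jj q.
Proof.
move=> pin proj.
have lifted : map (@vval n m) (rot r C) = rot t (ext_form ii jj q).
  rewrite ext_formE -map_rot -proj -map_comp map_id_in // => _ /mapP[v vC ->].
  exact/lift_proj_vertex/(allP pin)/map_f.
split.
  apply/negP => qi; have qW : inl q \in W by rewrite mem_Wlist_inl.
  have := map_f (lift_vertex q) qW; rewrite -ext_formE -(mem_rot t) -lifted /= /upair ltnn.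
  by case/mapP=> v _ /esym/eqP; rewrite (negbTE (vval_neq_diag v q)).
exists (rot_add C r (size (rot r C) - t)).
by rewrite -rot_rot_add -/(rotr t _) map_rotr lifted rotK.
Qed.

Lemma ext_form_of_external_lifting C : dsr_cycle adj C -> external_lifting C W ->
  exists q, q \notin ii /\ exists r, map (@vval n m) (rot r C) = ext_form ii jj q.
Proof.
case/and3P=> _ cC _ [r [w1 [w2 [hw [_ [_ lift]]]]]].
have: cycle adj (rot r C) by rewrite rot_cycle.
case Er: (rot r C) hw => [|[s|?] p] // hw /= P.
have empty : wempty w1 || wempty w2 by case: lift => -[-> _]; rewrite ?orbT.
have [q pin] := pinned_of_empty_walk P hw empty.
have [t proj] : exists t, (pinned_walk s p q).2 = rot t W.
  have full : ~~ wempty (pinned_walk s p q).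
    by rewrite /wempty -size_eq0 !size_map size_rcons.
  move: hw lift; rewrite (proj_walks_pinned P pin); case: ifP => _ [<- <-].
    by case=> -[e [_ [t ht]]]; [exists t | case/negP: full].
  by case=> -[e [_ [t ht]]]; [case/negP: full | exists t].
exists q; apply: (ext_form_of_pinned_projection (r := rot_add C r 1) (t := t)).
  by rewrite -rot_rot_add Er map_rot (eq_all_r (mem_rot _ _)).
by rewrite -rot_rot_add Er rot1_cons -proj.
Qed.

Lemma external_lifting_of_ext_form C q r : dsr_cycle adj C -> q \notin ii ->
  map (@vval n m) (rot r C) = ext_form ii jj q -> external_lifting C W.
Proof.
case/and3P=> C0 cC _ qi Ef.
have: cycle adj (rot r C) by rewrite rot_cycle.
have pin : all (pinned q) (map (@vval n m) (rot r C)).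
  by rewrite Ef ext_formE all_map; apply/allP => v _; exact: pinned_lift_vertex.
have projW : map (proj_vertex q) (map (@vval n m) (rot r C)) = W.
  by rewrite Ef map_proj_vertex_ext_form.
case Er: (rot r C) pin projW => [|[s|[k l]] p] pin projW /= P.
- by move: C0; rewrite -size_eq0 -(size_rot r) Er.
- have cycW : walk_is_cycle (pinned_walk s p q) W.
    split; first by rewrite /wclosed /wend /= !map_rcons last_rcons.
    by exists 1; rewrite -projW -!map_rot rot1_cons.
  have closed0 : wclosed (inl q, [::] : seq (V1 n m)) by rewrite /wclosed /wend eqxx.
  exists r; rewrite Er (proj_walks_pinned P pin); case: ifP => _.
    exists (inl q, [::]), (pinned_walk s p q); do 2 split=> //.
    by split; [case: cycW | left].
  exists (pinned_walk s p q), (inl q, [::]); split=> //.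
  by split; [case: cycW | split=> //; right].
- by move: (Wlist_neq_inr ii jj k (behead W)); rewrite -projW eqxx.
Qed.

Lemma internal_lifting_vertices C : dsr_cycle adj C -> internal_lifting C W ->
  forall s a, inl s \in C -> in_pair (val s) a -> a \in ii.
Proof.
case/and3P=> _ cC _ [r [w1 [w2 [hw [open [_ [t ht]]]]]]] s0 a s0C s0a.
have: cycle adj (rot r C) by rewrite rot_cycle.
have s0C' : inl s0 \in rot r C by rewrite mem_rot.
case Er: (rot r C) hw s0C' => [|[s|?] p] // hw s0C' /= P.
have := twisted_walks_cover P hw open s0C' s0a.
by rewrite /wcat /= in ht; rewrite ht mem_rot mem_Wlist_inl.
Qed.

End Liftings.
End Fold.

Unset Implicit Arguments.
Local Open Scope ring_scope.

Theorem proposition5p5 (K : realFieldType) (n m : nat)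
  (A : 'M[K]_(n, m)) (B : 'M[K]_(m, n)) (ii : seq 'I_n) (jj : seq 'I_m) :
  (2 <= n)%N ->
  size ii = size jj ->
  dsr_cycle (G1_adj A B) (Wlist ii jj) ->
  (forall C : seq (V2 n m), dsr_cycle (G2_adj A B) C ->
     (external_lifting C (Wlist ii jj) <->
      exists p : 'I_n, p \notin ii /\
        exists r : nat, map (@vval n m) (rot r C) = @ext_form n m ii jj p))
  /\
  (forall C : seq (V2 n m), dsr_cycle (G2_adj A B) C ->
     internal_lifting C (Wlist ii jj) ->
     forall s : S2 n, inl s \in C -> (val s).1 \in ii /\ (val s).2 \in ii).
Proof.
move=> _ size_ij _; split=> [C cycC | C cycC internal s sC].
  split; first exact: (ext_form_of_external_lifting size_ij cycC).
  by case=> q [qi [r Er]]; exact: (external_lifting_of_ext_form size_ij cycC qi Er).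
by split; apply: (internal_lifting_vertices size_ij cycC internal sC);
  rewrite /in_pair eqxx ?orbT.
Qed.
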